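(* Let $k\ge 4$ and let $\sigma\in S_k\setminus Z_k$ with $\sigma(1)=1$. Then there exists $i\in\{1,2,\dots,k\}$ such that $F_i(\sigma)\in S_{k-1}\setminus Z_{k-1}$.
   Context: $S_k$ is the group of permutations of $\{1,\dots,k\}$, and $Z_k=\{z_0,\dots,z_{k-1}\}\subseteq S_k$ is the subgroup of cyclic shifts, $z_h(i)=i+h$ if $i\le k-h$ and $z_h(i)=i+h-k$ if $i>k-h$. For $i\in\{1,\dots,k\}$ and $\sigma\in S_k$, $F_i(\sigma)\in S_{k-1}$ is defined for $j\in\{1,\dots,k-1\}$ by: $F_i(\sigma)(j)=\sigma(j)$ if $j<i$ and $\sigma(j)<\sigma(i)$; $=\sigma(j)-1$ if $j<i$ and $\sigma(j)>\sigma(i)$; $=\sigma(j+1)$ if $j\ge i$ and $\sigma(j+1)<\sigma(i)$; $=\sigma(j+1)-1$ if $j\ge i$ and $\sigma(j+1)>\sigma(i)$. (That is, delete position $i$ and the value $\sigma(i)$ and relabel order-preservingly.) *)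

From mathcomp Require Import all_boot all_fingroup.
Set Implicit Arguments. Unset Strict Implicit. Unset Printing Implicit Defensive.

(* Conventions: S_k is {perm 'I_k}, positions/values 0-based:
   paper's i in {1..k} corresponds to ordinal i-1. *)

Definition zshift_fun (k h : nat) (i : 'I_k) : 'I_k :=
  Ordinal (ltn_pmod (i + h) (leq_ltn_trans (leq0n i) (ltn_ord i))).

Definition in_Zk (k : nat) (s : {perm 'I_k}) : Prop :=
  exists h : nat, h < k /\ forall i : 'I_k, s i = zshift_fun h i.

(* F_i: delete position i and value s i, relabel order-preservingly. *)
Definition F_fun (k : nat) (i : 'I_k.+1) (s : {perm 'I_k.+1}) (j : 'I_k) : 'I_k :=
  odflt j (unlift (s i) (s (lift i j))).

Lemma F_fun_spec k (i : 'I_k.+1) (s : {perm 'I_k.+1}) (j : 'I_k) :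
  lift (s i) (F_fun i s j) = s (lift i j).
Proof.
rewrite /F_fun; case: unliftP => [j' -> //|].
by move/perm_inj => /eqP; rewrite eq_sym (negbTE (neq_lift _ _)).
Qed.

Lemma F_fun_inj k (i : 'I_k.+1) (s : {perm 'I_k.+1}) : injective (F_fun i s).
Proof.
move=> a b /(congr1 (lift (s i))); rewrite !F_fun_spec => /perm_inj.
exact: lift_inj.
Qed.

Definition F (k : nat) (i : 'I_k.+1) (s : {perm 'I_k.+1}) : {perm 'I_k} :=
  perm (@F_fun_inj k i s).

From mathcomp Require Import all_boot all_fingroup.
From mathcomp Require Import zify.

Set Implicit Arguments.
Unset Strict Implicit.
Unset Printing Implicit Defensive.

(* Since sigma fixes 1 and lies outside Z_k, it is not the identity and so has
   an inversion a < b, sigma(b) < sigma(a).  Pick c in {2, 3, 4} different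
   from a and b.  Then F_c(sigma) still fixes 1, so if it were a cyclic shift
   it would be the identity; but deleting position c keeps the inversion
   (a, b), a contradiction. *)

Lemma in_Zk1 n : in_Zk (1 : {perm 'I_n.+1}).
Proof.
by exists 0; split => // i; apply: val_inj; rewrite perm1 /= addn0 modn_small.
Qed.

Lemma in_Zk_fix0 n (s : {perm 'I_n.+1}) :
  in_Zk s -> s ord0 = ord0 -> s = 1%g.
Proof.
case=> h [h_lt sE] s0.
have h0 : h = 0 by have := congr1 val (sE ord0); rewrite s0 /= modn_small.
apply/permP => i; apply: val_inj.
by rewrite sE perm1 /= h0 addn0 modn_small.
Qed.

Lemma leq_homo_ltn_ord n m (f : 'I_n -> 'I_m) :
  {homo f : i j / i < j} -> forall i : 'I_n, i <= f i.
Proof.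
move=> f_homo [i i_lt]; elim: i i_lt => [|i IHi] i_lt //=.
have := f_homo (Ordinal (ltnW i_lt)) (Ordinal i_lt) (ltnSn i).
by have := IHi (ltnW i_lt); apply: leq_ltn_trans.
Qed.

Lemma homo_ltn_perm_id n (s : {perm 'I_n}) :
  {homo s : i j / i < j} -> s = 1%g.
Proof.
move=> s_homo.
have sV_homo : {homo (s^-1)%g : i j / i < j}.
  move=> i j; apply: contraTT; rewrite -!leqNgt leq_eqVlt.
  case/predU1P => [/val_inj/perm_inj ->|/s_homo]; first by rewrite leqnn.
  by rewrite !permKV => /ltnW.
apply/permP => i; apply: val_inj; apply/eqP; rewrite perm1 eqn_leq.
have := leq_homo_ltn_ord sV_homo (s i); rewrite permK => ->.
by rewrite leq_homo_ltn_ord.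
Qed.

Lemma perm_inversion n (s : {perm 'I_n}) :
  s != 1%g -> exists a b : 'I_n, a < b /\ s b < s a.
Proof.
move=> s_neq1.
have /existsP[a /existsP[b /andP[ab sba]]] :
    [exists a : 'I_n, exists b : 'I_n, (a < b) && (s b < s a)].
  apply: contraNT s_neq1 => /existsPn no_inv.
  apply/eqP/homo_ltn_perm_id => a b ab.
  have /existsPn/(_ b) := no_inv a; rewrite ab /= -leqNgt leq_eqVlt.
  by case/predU1P => [/val_inj/perm_inj ab_eq|//]; rewrite ab_eq ltnn in ab.
by exists a, b.
Qed.

Lemma ltn_lift n (h : 'I_n) (i j : 'I_n.-1) : (lift h i < lift h j) = (i < j).
Proof. by rewrite /= !ltnNge leq_bump2. Qed.

Lemma lift_F k (c : 'I_k.+1) (s : {perm 'I_k.+1}) j :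
  lift (s c) (F c s j) = s (lift c j).
Proof. by rewrite permE F_fun_spec. Qed.

Lemma ltn_F k (c : 'I_k.+1) (s : {perm 'I_k.+1}) i j :
  (F c s i < F c s j) = (s (lift c i) < s (lift c j)).
Proof. by rewrite -!lift_F ltn_lift. Qed.

Lemma F_fix0 k (c : 'I_k.+2) (s : {perm 'I_k.+2}) :
  c != ord0 -> s ord0 = ord0 -> F c s ord0 = ord0.
Proof.
move=> c_neq0 s0.
have lift_c0 : lift c ord0 = ord0.
  by apply: val_inj; rewrite /= /bump leqNgt lt0n c_neq0.
apply: val_inj; have := congr1 val (lift_F c s ord0).
by rewrite lift_c0 s0 /= /bump => /eqP; rewrite addn_eq0 => /andP[_ /eqP].
Qed.

Lemma exists_avoid2 (a b : nat) : exists2 c, 0 < c < 4 & (c != a) && (c != b).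
Proof.
have [|] := boolP ((1 != a) && (1 != b)); first by exists 1.
have [|] := boolP ((2 != a) && (2 != b)); first by exists 2.
by exists 3 => //; lia.
Qed.

Theorem lemma4p5 (k : nat) (hk : 3 <= k) (s : {perm 'I_k.+1}) :
  ~ in_Zk s -> s ord0 = ord0 -> exists i : 'I_k.+1, ~ in_Zk (F i s).
Proof.
case: k hk s => [//|k] hk s nZ s0.
have s_neq1 : s != 1%g by apply: contra_notN nZ => /eqP->; apply: in_Zk1.
have [a [b [ab sba]]] := perm_inversion s_neq1.
have [c /andP[c_gt0 c_lt4] /andP[ca cb]] := exists_avoid2 a b.
pose C : 'I_k.+2 := inord c.
have C_val : val C = c by apply: inordK; lia.
have C_neq0 : C != ord0 by rewrite -val_eqE C_val /= -lt0n.
exists C => ZC.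
have FC1 : F C s = 1%g := in_Zk_fix0 ZC (F_fix0 C_neq0 s0).
have C_neq_a : C != a by rewrite -val_eqE C_val.
have C_neq_b : C != b by rewrite -val_eqE C_val.
have [a' a_eq _] := unlift_some C_neq_a.
have [b' b_eq _] := unlift_some C_neq_b.
move: ab sba; rewrite a_eq b_eq ltn_lift -ltn_F FC1 !perm1 => ab.
by move/(ltn_trans ab); rewrite ltnn.
Qed.
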